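(* Let $\mathcal{M}_{\mathcal{T}}$ be a staged tree model. Let $H$ be the $(|I|+|F|)\times|J|$ matrix with rows indexed by $I\sqcup F$ and entries $h_{ij}=\mu_{ij}$ for $i\in I$ and $h_{fj}=-\sum_{s_\ell\in f}\mu_{\ell j}$ for $f\in F$. Define $\lambda\in\{-1,+1\}^{|J|}$ by $\lambda_j=(-1)^{\sum_f h_{fj}}$. Then the pair $(\tilde H,\tilde\lambda)$ obtained from $(H,\lambda)$ by summing collinear rows and deleting zero rows is the Horn pair of $\mathcal{M}_{\mathcal{T}}$, i.e. it is a Horn pair whose Horn map equals the MLE of $\mathcal{M}_{\mathcal{T}}$ and has image $\mathcal{M}_{\mathcal{T}}$.
   Context: Staged tree: a directed rooted tree $\mathcal{T}$, every non-leaf vertex with at least two outgoing edges, with edge labels from $\{s_i:i\in I\}$ such that any two florets (multisets of labels on the outgoing edges of a vertex) are equal or disjoint; $F$ is the set of florets, $J$ the set of root-to-leaf paths ($|J|=n+1$), $\mu_{ij}$ the number of occurrences of $s_i$ on path $j$. The model $\mathcal{M}_{\mathcal{T}}\subseteq\Delta_n$ is the image of $\{(s_i)\in(0,1)^{|I|}:\sum_{s_i\in f}s_i=1\ \forall f\}$ under $p_j=\prod_i s_i^{\mu_{ij}}$. For an integer matrix $H=(h_{ij})$ with columns $h_j$ summing to zero and a vector $\lambda$, write $(Hu)^{h_j}=\prod_i(\sum_k h_{ik}u_k)^{h_{ij}}$ and consider the rational map $u\mapsto(\lambda_j(Hu)^{h_j})_j$. $(H,\lambda)$ is friendly if all $\lambda_j\ne0$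 and $\sum_j\lambda_j(Hu)^{h_j}=1$ identically. A friendly pair is a Horn pair if no row of $H$ is zero or a multiple of another row and the map is defined on and sends positive vectors to positive vectors; its restriction to $\mathbb{R}^{|J|}_{>0}$ is the Horn map. The reduction $(\tilde H,\tilde\lambda)$: replace each class of collinear rows of $H$ by their sum, delete zero rows, and take $\tilde\lambda$ the coefficient vector so that $(\tilde H,\tilde\lambda)$ defines the same rational map as $(H,\lambda)$. *)

From HB Require Import structures.
From mathcomp Require Import all_boot all_order all_algebra.
From mathcomp Require Import boolp reals exp.
Set Implicit Arguments. Unset Strict Implicit. Unset Printing Implicit Defensive.
Import Order.TTheory GRing.Theory Num.Theory.
Local Open Scope ring_scope.

(* Staged trees.  Edge labels are s_i, i : 'I_m (so I = 'I_m).            *)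
Inductive ltree (m : nat) : Type :=
  | Node : seq ('I_m * ltree m) -> ltree m.
Arguments Node {m}.

(* root-to-leaf paths, as the sequences of labels met along them; the     *)
(* list position is the path index j (distinct paths may carry the same   *)
(* label sequence, they are still distinct entries).                      *)
Fixpoint paths m (t : ltree m) : seq (seq 'I_m) :=
  match t with
  | Node cs =>
      if cs is [::] then [:: [::]]
      else flatten (map (fun c => map (cons c.1) (paths c.2)) cs)
  end.

Fixpoint florets_seq m (t : ltree m) : seq (seq 'I_m) :=
  match t with
  | Node cs =>
      (if cs is [::] then [::] else [:: map fst cs])
        ++ flatten (map (fun c => florets_seq c.2) cs)
  end.

Fixpoint local_ok m (t : ltree m) : bool :=
  match t with
  | Node cs =>
      [&& nilp cs || (1 < size cs)%N, uniq (map fst cs)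
        & all id (map (fun c => local_ok c.2) cs)]
  end.

Definition staged_tree m (t : ltree m) : Prop :=
  local_ok t /\
  forall f g, f \in florets_seq t -> g \in florets_seq t ->
    perm_eq f g \/ ~~ has (fun x => x \in g) f.

(* the set F of florets (a floret with distinct labels is a set) *)
Definition florets m (t : ltree m) : seq {set 'I_m} :=
  undup [seq [set x in f] | f <- florets_seq t].

Definition mu m (t : ltree m) (i : 'I_m) (j : 'I_(size (paths t))) : nat :=
  count_mem i (nth [::] (paths t) j).
Arguments mu {m} t i j.

Definition model (R : realType) m (t : ltree m)
    (p : 'I_(size (paths t)) -> R) : Prop :=
  exists s : 'I_m -> R,
    [/\ (forall i, 0 < s i < 1),
        (forall f, f \in florets t -> \sum_(i in f) s i = 1)
      & forall j, p j = \prod_(i < m) s i ^+ mu t i j].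
Arguments model R {m} t p.

Definition Hst m (t : ltree m) :
    'M[int]_(m + size (florets t), size (paths t)) :=
  \matrix_(r, j)
    match split r with
    | inl i => (mu t i j)%:Z
    | inr a => - \sum_(l in nth set0 (florets t) a) (mu t l j)%:Z
    end.
Arguments Hst {m} t.

Definition lamst (R : realType) m (t : ltree m) : 'I_(size (paths t)) -> R :=
  fun j => (-1) ^ (\sum_(a < size (florets t)) Hst t (rshift m a) j).
Arguments lamst R {m} t j.

Section Horn.
Variable R : realType.

Definition Hu k N (H : 'M[int]_(k, N)) (u : 'I_N -> R) (i : 'I_k) : R :=
  \sum_(l < N) (H i l)%:~R * u l.

Definition horn k N (H : 'M[int]_(k, N)) (lam : 'I_N -> R) (u : 'I_N -> R)
    (j : 'I_N) : R :=
  lam j * \prod_(i < k) Hu H u i ^ (H i j).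

Definition nzrow k N (H : 'M[int]_(k, N)) (i : 'I_k) : Prop :=
  exists l, H i l != 0.

(* (zero rows contribute the constant factor 0^0 = 1)                     *)
Definition generic k N (H : 'M[int]_(k, N)) (u : 'I_N -> R) : Prop :=
  forall i, nzrow H i -> Hu H u i != 0.

Definition horn_defined k N (H : 'M[int]_(k, N)) (u : 'I_N -> R) : Prop :=
  forall i, (exists l, H i l < 0) -> Hu H u i != 0.

Definition row_mult k N (H : 'M[int]_(k, N)) (i i' : 'I_k) : Prop :=
  exists c : rat, forall l, (H i l)%:~R = c * (H i' l)%:~R.

Definition friendly k N (H : 'M[int]_(k, N)) (lam : 'I_N -> R) : Prop :=
  [/\ (forall j, \sum_(i < k) H i j = 0),
      (forall j, lam j != 0)
    & forall u, generic H u -> \sum_(j < N) horn H lam u j = 1].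

Definition horn_pair k N (H : 'M[int]_(k, N)) (lam : 'I_N -> R) : Prop :=
  [/\ friendly H lam,
      (forall i, nzrow H i),
      (forall i i', i != i' -> ~ row_mult H i i')
    & forall u, (forall j, 0 < u j) ->
        horn_defined H u /\ forall j, 0 < horn H lam u j].

Definition cls k N (H : 'M[int]_(k, N)) (i : 'I_k) : {set 'I_k} :=
  [set i' | `[< nzrow H i' /\ row_mult H i' i >]].

(* (H', lam') is the reduction of (H, lam): the rows of H' are exactly    *)
(* (each once) the nonzero sums of the collinearity classes of nonzero    *)
(* rows of H, and (H', lam') defines the same rational map as (H, lam).   *)
Definition is_reduction k k' N (H : 'M[int]_(k, N)) (lam : 'I_N -> R)
    (H' : 'M[int]_(k', N)) (lam' : 'I_N -> R) : Prop :=
  exists g : 'I_k' -> 'I_k,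
    (forall a, nzrow H (g a)) /\
    [/\ (forall a b, cls H (g a) = cls H (g b) -> a = b),
        (forall i, nzrow H i ->
           (exists l, \sum_(i' in cls H i) H i' l != 0) ->
           exists a, cls H (g a) = cls H i),
        (forall a l, H' a l = \sum_(i' in cls H (g a)) H i' l),
        (forall a, nzrow H' a) &
      forall u, generic H u -> generic H' u ->
          forall j, horn H lam u j = horn H' lam' u j].

Definition loglik N (u p : 'I_N -> R) : R := \sum_(j < N) u j * ln (p j).

Definition is_MLE N (M : ('I_N -> R) -> Prop) (u q : 'I_N -> R) : Prop :=
  M q /\ forall p, M p -> loglik u p <= loglik u q /\
                    (loglik u p = loglik u q -> forall j, p j = q j).

End Horn.

(* The rows of H indexed by labels evaluate to the label counts
   x_i = sum_j mu_ij u_j, those indexed by florets to -Y_f with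
   Y_f = sum_(i in f) x_i, and lambda exactly cancels the signs of the floret
   rows.  Hence the Horn map sends u to the path monomials of the parameters
   s_i = x_i / Y_f (i in f).  These parameters lie in the model (path
   probabilities sum to 1 by induction on the tree), they maximise the
   likelihood by Gibbs' inequality, and every model point p is reached from
   u = p because its expected label counts satisfy x_i(p) = s_i Y_f(p).
   Summing collinear rows changes the map only by a constant factor, absorbed
   into the reduced lambda, since the linear forms of collinear rows are
   proportional; the identity sum_j lambda_j (Hu)^h_j = 1 passes from points
   generic for H to points generic for the reduced matrix because along a line
   it is a polynomial identity. *)

From HB Require Import structures.
From mathcomp Require Import all_boot all_order all_algebra.
From mathcomp Require Import boolp reals exp.
From mathcomp Require Import ring lra zify.
Set Implicit Arguments. Unset Strict Implicit. Unset Printing Implicit Defensive.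
Import Order.TTheory GRing.Theory Num.Theory.
Local Open Scope ring_scope.

Lemma exprz_sum (R : fieldType) (I : finType) (P : pred I) (x : R) (f : I -> int) :
  x != 0 -> x ^ (\sum_(i | P i) f i) = \prod_(i | P i) x ^ f i.
Proof.
move=> nx; apply: (big_morph (fun n : int => x ^ n)); last by rewrite expr0z.
by move=> m n; rewrite expfzDr.
Qed.

Section Collinear.
Variable N : nat.

Definition collinear (p q : 'I_N -> int) := forall l l', p l * q l' = p l' * q l.

Lemma collinear_refl p : collinear p p.
Proof. by move=> l l'; rewrite mulrC. Qed.

Lemma collinear_sym p q : collinear p q -> collinear q p.
Proof. by move=> h l l'; rewrite [LHS]mulrC -h mulrC. Qed.

Lemma collinear_trans p q r l0 :
  q l0 != 0 -> collinear p q -> collinear q r -> collinear p r.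
Proof.
move=> nz pq qr l l'; apply: (mulIf (mulf_neq0 nz nz)).
transitivity ((p l * q l0) * (q l0 * r l')); first by ring.
rewrite pq qr.
transitivity ((p l0 * r l0) * (q l * q l')); first by ring.
transitivity ((p l' * q l0) * (q l0 * r l)); last by ring.
by rewrite pq qr; ring.
Qed.

Lemma collinear_sum (I : finType) (P : pred I) (F : I -> 'I_N -> int) q :
  (forall i, P i -> collinear (F i) q) ->
  collinear (fun l => \sum_(i | P i) F i l) q.
Proof. by move=> h l l'; rewrite !mulr_suml; apply: eq_bigr => i Pi; apply: h. Qed.

Variable R : realType.

Definition linform (p : 'I_N -> int) (u : 'I_N -> R) := \sum_(l < N) (p l)%:~R * u l.

Lemma linform_collinear p q u v :
  collinear p q -> linform p u * linform q v = linform p v * linform q u.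
Proof.
move=> pq; rewrite /linform !big_distrlr /= [RHS]exchange_big /=.
apply: eq_bigr => l _; apply: eq_bigr => l' _.
have e : ((p l)%:~R * (q l')%:~R : R) = (p l')%:~R * (q l)%:~R by rewrite -!intrM pq.
transitivity ((p l)%:~R * (q l')%:~R * (u l * v l')); first by ring.
by rewrite e; ring.
Qed.

Definition basis_vec (l : 'I_N) : 'I_N -> R := fun l' => (l' == l)%:R.

Lemma linform_basis p l : linform p (basis_vec l) = (p l)%:~R.
Proof.
rewrite /linform (bigD1 l) //= big1 ?addr0 /basis_vec ?eqxx ?mulr1 // => i /negPf ->.
by rewrite mulr0.
Qed.

Lemma linformD p u v t :
  linform p (fun l => u l + t * v l) = linform p u + linform p v * t.
Proof. by rewrite /linform mulr_suml -big_split; apply: eq_bigr => l _ /=; ring. Qed.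

End Collinear.

Section CollinearityClasses.
Variables (k N : nat) (H : 'M[int]_(k, N)).

Lemma nzrowN i : ~ nzrow H i -> forall l, H i l = 0.
Proof. by move=> h l; apply/eqP; apply/negPn/negP => nz; apply: h; exists l. Qed.

Lemma row_mult_collinear i i' :
  nzrow H i' -> row_mult H i i' <-> collinear (H i) (H i').
Proof.
move=> [l0 h0]; split.
  by move=> [c hc] l l'; apply: (@intr_inj rat); rewrite !intrM hc (hc l'); ring.
move=> hc; exists ((H i l0)%:~R / (H i' l0)%:~R) => l.
have hb : ((H i' l0)%:~R : rat) != 0 by rewrite intr_eq0.
apply: (mulIf hb); have := hc l l0 => /(congr1 (fun z => (z%:~R : rat))).
by rewrite !intrM => ->; field.
Qed.

Lemma in_clsP i i' : nzrow H i ->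
  i' \in cls H i <-> nzrow H i' /\ collinear (H i') (H i).
Proof.
move=> nzi; rewrite inE; split.
  by move/asboolP => [h1 /(row_mult_collinear _ nzi) h2].
by move=> [h1 /(row_mult_collinear _ nzi) h2]; apply/asboolP.
Qed.

Lemma cls_nzrow i i' : i' \in cls H i -> nzrow H i'.
Proof. by rewrite inE => /asboolP []. Qed.

Lemma cls_self i : nzrow H i -> i \in cls H i.
Proof. by move=> nzi; apply/in_clsP => //; split => //; apply: collinear_refl. Qed.

Lemma cls_eq i j : nzrow H i -> j \in cls H i -> cls H j = cls H i.
Proof.
move=> nzi hj; have [nzj cji] := (in_clsP _ nzi).1 hj.
have [l0 h0] := nzi; have [l1 h1] := nzj.
apply/setP => x; apply/idP/idP => hx.
  have [nzx cxj] := (in_clsP _ nzj).1 hx.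
  by apply/in_clsP => //; split => //; apply: collinear_trans h1 cxj cji.
have [nzx cxi] := (in_clsP _ nzi).1 hx.
by apply/in_clsP => //; split => //; apply: collinear_trans h0 cxi (collinear_sym cji).
Qed.

Definition nzrows := [pred i | `[< nzrow H i >]].

Lemma big_cls (V : Type) (idx : V) (op : Monoid.com_law idx) (F : 'I_k -> V) :
  \big[op/idx]_(i in nzrows) F i =
  \big[op/idx]_(C in [set cls H i | i in nzrows]) \big[op/idx]_(i in C) F i.
Proof.
rewrite (partition_big_imset (cls H)) /=.
apply: eq_bigr => _ /imsetP [i0 /asboolP nz0 ->]; apply: eq_bigl => i.
apply/andP/idP => [[/asboolP nzi /eqP <-] | hi]; first exact: cls_self.
by split; [apply/asboolP; apply: cls_nzrow hi | rewrite (cls_eq nz0 hi)].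
Qed.

Variable R : realType.

Lemma horn_nzrows (lam u : 'I_N -> R) j :
  horn H lam u j = lam j * \prod_(i in nzrows) Hu H u i ^ H i j.
Proof.
rewrite /horn (bigID (mem nzrows)) /= [X in _ * (_ * X)]big1 ?mulr1 //.
by move=> i /asboolPn nzi; rewrite nzrowN // expr0z.
Qed.

Definition Hu_ratio (u u0 : 'I_N -> R) i := Hu H u i / Hu H u0 i.

Lemma horn_ratio (lam u u0 : 'I_N -> R) j : generic H u0 ->
  horn H lam u j =
  horn H lam u0 j * \prod_(i in nzrows) Hu_ratio u u0 i ^ H i j.
Proof.
move=> gu0; rewrite !horn_nzrows -mulrA -big_split /=; congr (_ * _).
apply: eq_bigr => i /asboolP nzi.
by rewrite -expfzMl /Hu_ratio mulrC divfK ?gu0.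
Qed.

End CollinearityClasses.

Section LineIdentity.
Variable R : realType.

Lemma poly_eq0_cofinite (Q : {poly R}) (bad : seq R) :
  (forall t, t \notin bad -> root Q t) -> Q = 0.
Proof.
move=> hQ; pose cs := [seq (i%:R : R) | i <- iota 0 (size bad + size Q)].
have ucs : uniq cs.
  by rewrite map_inj_uniq ?iota_uniq // => a b /eqP; rewrite eqr_nat => /eqP.
apply: (@roots_geq_poly_eq0 _ _ [seq t <- cs | t \notin bad]).
- by apply/allP => t; rewrite mem_filter => /andP [/hQ].
- exact: filter_uniq.
have hbad : (count (fun t => t \in bad) cs <= size bad)%N.
  rewrite -size_filter; apply: uniq_leq_size; first exact: filter_uniq.
  by move=> x; rewrite mem_filter => /andP [].
have hsplit : (count (fun t => t \in bad) cs + count (fun t => t \notin bad) cs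
               = size cs)%N := count_predC _ cs.
rewrite size_filter -(leq_add2l (count (fun t => t \in bad) cs)) hsplit.
by rewrite size_map size_iota leq_add2r.
Qed.

Definition on_line K (y z : 'I_K -> R) (t : R) a := y a + z a * t.

(* Clearing the denominators with a large power of the product of the linear
   forms turns the identity along the line into a polynomial identity in t. *)
Lemma sum_prod_exprz_on_line K n (y z : 'I_K -> R) (lam : 'I_n -> R)
    (e : 'I_K -> 'I_n -> int) (bad : seq R) :
  (forall a, y a != 0) ->
  (forall t, t \notin bad -> (forall a, on_line y z t a != 0) /\
      \sum_j lam j * \prod_a on_line y z t a ^ e a j = 1) ->
  \sum_j lam j * \prod_a y a ^ e a j = 1.
Proof.
move=> hy ht.
pose M := (\sum_a \sum_j `|e a j|)%N.
have hM a j : 0 <= M%:Z + e a j.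
  have : (`|e a j| <= M)%N.
    by rewrite /M (bigD1 a) //= (bigD1 j) //= -addnA leq_addr.
  lia.
pose ell a : {poly R} := (y a)%:P + z a *: 'X.
have ellE a t : (ell a).[t] = on_line y z t a.
  by rewrite /ell hornerD hornerC hornerZ hornerX.
pose Q : {poly R} :=
  \sum_j lam j *: \prod_a ell a ^+ `|M%:Z + e a j| - \prod_a ell a ^+ M.
have QE t : (forall a, on_line y z t a != 0) ->
    Q.[t] = \prod_a on_line y z t a ^+ M *
            (\sum_j lam j * \prod_a on_line y z t a ^ e a j - 1).
  move=> nz; rewrite /Q hornerD hornerN horner_sum horner_prod mulrBr mulr1.
  congr (_ - _); last by apply: eq_bigr => a _; rewrite horner_exp ellE.
  rewrite mulr_sumr; apply: eq_bigr => j _; rewrite hornerZ horner_prod.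
  rewrite mulrCA -big_split /=; congr (_ * _); apply: eq_bigr => a _.
  by rewrite horner_exp ellE exprnP gez0_abs // expfzDr // exprnP.
have Q0 : Q = 0.
  apply: (poly_eq0_cofinite (bad := bad)) => t /ht [nz h1].
  by rewrite /root QE // h1 subrr mulr0.
have line0 : on_line y z 0 = y by apply/funext => a; rewrite /on_line mulr0 addr0.
have := QE 0; rewrite Q0 horner0 line0 => /(_ hy) /esym /eqP.
rewrite mulf_eq0 prodf_seq_eq0 subr_eq0 => /orP [/hasP [a _ /andP [_]] | /eqP //].
by rewrite expf_eq0 (negPf (hy a)) andbF.
Qed.

End LineIdentity.

Section Reduction.
Variables (R : realType) (k N k' : nat) (H : 'M[int]_(k, N)) (H' : 'M[int]_(k', N)).
Variable g : 'I_k' -> 'I_k.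
Hypothesis g_nzrow : forall a, nzrow H (g a).
Hypothesis g_inj : forall a b, cls H (g a) = cls H (g b) -> a = b.
Hypothesis g_surj : forall i, nzrow H i ->
  (exists l, \sum_(i' in cls H i) H i' l != 0) -> exists a, cls H (g a) = cls H i.
Hypothesis H'E : forall a l, H' a l = \sum_(i' in cls H (g a)) H i' l.
Hypothesis H'_nzrow : forall a, nzrow H' a.

Lemma collinear_reduced_row a : collinear (H' a) (H (g a)).
Proof.
have -> : H' a = fun l => \sum_(i' in cls H (g a)) H i' l.
  by apply/funext => l; rewrite H'E.
by apply: collinear_sum => i /(in_clsP _ (g_nzrow a)) [].
Qed.

Lemma generic_reduction (u : 'I_N -> R) : generic H u -> generic H' u.
Proof.
move=> gu a _; apply/eqP => Hu0; have [l /negP] := H'_nzrow a; apply.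
have := linform_collinear (basis_vec R l) u (collinear_reduced_row a).
rewrite -[linform (H' a) u]/(Hu H' u a) Hu0 mul0r => /eqP.
by rewrite mulf_eq0 (negPf (gu _ (g_nzrow a))) orbF linform_basis intr_eq0.
Qed.

Lemma big_reduction (V : Type) (idx : V) (op : Monoid.com_law idx) (F : 'I_k -> V) :
  (forall i, nzrow H i -> (forall l, \sum_(i' in cls H i) H i' l = 0) ->
     \big[op/idx]_(i' in cls H i) F i' = idx) ->
  \big[op/idx]_(i in nzrows H) F i =
  \big[op/idx]_a \big[op/idx]_(i in cls H (g a)) F i.
Proof.
move=> zero_cls.
pose nzsum (C : {set 'I_k}) := `[< exists l, \sum_(i in C) H i l != 0 >].
rewrite big_cls (bigID nzsum) /=.
rewrite [X in op _ X]big1 ?Monoid.mulm1; last first.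
  move=> _ /andP [/imsetP [i /asboolP nzi ->] /asboolPn hn]; apply: zero_cls => // l.
  by apply/eqP/negPn/negP => hl; apply: hn; exists l.
rewrite (eq_bigl (mem [set cls H (g a) | a : 'I_k'])) => [|C]; last first.
  apply/andP/imsetP => [[/imsetP [i /asboolP nzi ->] /asboolP]|].
    by move=> /(g_surj nzi) [a ha]; exists a.
  move=> [a _ ->]; split; first by apply/imsetP; exists (g a) => //; apply/asboolP.
  by apply/asboolP; have [l hl] := H'_nzrow a; exists l; rewrite -H'E.
by rewrite big_imset //= => a b _ _; apply: g_inj.
Qed.

Lemma colsum_reduction j : \sum_a H' a j = \sum_i H i j.
Proof.
rewrite (bigID (mem (nzrows H))) /= [X in _ + X]big1 ?addr0; last first.
  by move=> i /asboolPn nzi; apply: nzrowN.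
by rewrite big_reduction; [apply: eq_bigr => a _; rewrite H'E | move=> i _; apply].
Qed.

Lemma reduction_no_row_mult a b : a != b -> ~ row_mult H' a b.
Proof.
move=> /eqP nab /(row_mult_collinear _ (H'_nzrow b)) cab; apply: nab.
have [l0 h0] := H'_nzrow a; have [l1 h1] := H'_nzrow b.
have c1 := collinear_trans h0 (collinear_sym (collinear_reduced_row a)) cab.
have c2 := collinear_trans h1 c1 (collinear_reduced_row b).
by apply: g_inj; apply: cls_eq (g_nzrow b) _; apply/in_clsP.
Qed.

Section Ratio.
Variables (u u0 : 'I_N -> R).
Hypotheses (gu : generic H u) (gu0 : generic H u0).

Lemma Hu_ratio_cls i i' : nzrow H i -> i' \in cls H i ->
  Hu_ratio H u u0 i' = Hu_ratio H u u0 i.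
Proof.
move=> nzi /(in_clsP _ nzi) [nzi' c].
have := linform_collinear u u0 c; rewrite /Hu_ratio => e.
apply/eqP; rewrite eqr_div ?gu0 //.
by apply/eqP; rewrite -[Hu _ _ _]/(linform _ _) e mulrC.
Qed.

Lemma Hu_ratio_reduction a : Hu_ratio H' u u0 a = Hu_ratio H u u0 (g a).
Proof.
have := linform_collinear u u0 (collinear_reduced_row a); rewrite /Hu_ratio => e.
apply/eqP; rewrite eqr_div ?gu0 ?(generic_reduction gu0) //.
by apply/eqP; rewrite -[Hu _ _ _]/(linform _ _) e mulrC.
Qed.

Lemma prod_Hu_ratio_cls i j : nzrow H i ->
  \prod_(i' in cls H i) Hu_ratio H u u0 i' ^ H i' j =
  Hu_ratio H u u0 i ^ (\sum_(i' in cls H i) H i' j).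
Proof.
move=> nzi; rewrite exprz_sum ?mulf_neq0 ?invr_eq0 ?gu ?gu0 //.
by apply: eq_bigr => i' hi'; rewrite (Hu_ratio_cls nzi hi').
Qed.

Lemma prod_Hu_ratio_reduction j :
  \prod_(i in nzrows H) Hu_ratio H u u0 i ^ H i j =
  \prod_(a in nzrows H') Hu_ratio H' u u0 a ^ H' a j.
Proof.
rewrite [RHS](eq_bigl xpredT); last by move=> a; apply/asboolP.
rewrite big_reduction => [|i nzi zero_cls]; last first.
  by rewrite prod_Hu_ratio_cls // zero_cls expr0z.
by apply: eq_bigr => a _; rewrite prod_Hu_ratio_cls // Hu_ratio_reduction H'E.
Qed.

End Ratio.

Definition reduced_coef (lam u0 : 'I_N -> R) j :=
  horn H lam u0 j / \prod_a Hu H' u0 a ^ H' a j.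

Lemma horn_reduction (lam u0 u : 'I_N -> R) j : generic H u0 -> generic H u ->
  horn H lam u j = horn H' (reduced_coef lam u0) u j.
Proof.
move=> gu0 gu; have gu0' := generic_reduction gu0.
rewrite (horn_ratio lam u j gu0) (horn_ratio _ u j gu0').
rewrite (prod_Hu_ratio_reduction gu gu0).
congr (_ * _); rewrite [RHS]/horn /reduced_coef /= divfK //.
by apply/prodf_neq0 => a _; apply/expfz_neq0/gu0'.
Qed.

Lemma reduction_sum_horn (lam lam' v : 'I_N -> R) : generic H v ->
  (forall u, generic H u -> \sum_j horn H lam u j = 1) ->
  (forall u, generic H u -> generic H' u -> forall j,
     horn H lam u j = horn H' lam' u j) ->
  forall u, generic H' u -> \sum_j horn H' lam' u j = 1.
Proof.
move=> gv sum1 same u gu.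
pose bad := [seq - Hu H u i / Hu H v i | i <- enum 'I_k].
apply: (sum_prod_exprz_on_line (z := Hu H' v) (bad := bad)) => [a|t tb].
  exact/gu/H'_nzrow.
have gen_t : generic H (fun l => u l + t * v l).
  move=> i nzi; rewrite [Hu _ _ _]linformD; apply: contra tb => /eqP e0.
  apply/mapP; exists i; first by rewrite mem_enum.
  apply: (mulIf (gv _ nzi)); rewrite !mulNr divfK ?gv // mulrC.
  by apply/eqP; rewrite -addr_eq0 addrC e0.
have gen_t' := generic_reduction gen_t.
have line_t a : on_line (Hu H' u) (Hu H' v) t a = Hu H' (fun l => u l + t * v l) a.
  by rewrite [RHS]linformD.
split=> [a|]; first by rewrite line_t; exact/gen_t'/H'_nzrow.
rewrite -[RHS](sum1 _ gen_t); apply: eq_bigr => j _.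
rewrite same // /horn; congr (_ * _).
by apply: eq_bigr => a _; rewrite line_t.
Qed.

End Reduction.

Section ReductionExists.
Variables (k N : nat) (H : 'M[int]_(k, N)).

Definition nzsum_cls (i : 'I_k) := `[< exists l, \sum_(i' in cls H i) H i' l != 0 >].

Definition cls_reps : {set 'I_k} :=
  [set i | [&& `[< nzrow H i >], nzsum_cls i & [pick i' in cls H i] == Some i]].

Lemma cls_reps_nzrow r : r \in cls_reps -> nzrow H r.
Proof. by rewrite inE => /and3P [/asboolP]. Qed.

Lemma cls_reps_inj r r' : r \in cls_reps -> r' \in cls_reps ->
  cls H r = cls H r' -> r = r'.
Proof.
rewrite !inE => /and3P [_ _ /eqP pr] /and3P [_ _ /eqP pr'] e.
by move: pr; rewrite e pr' => -[].
Qed.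

Lemma cls_reps_cover i : nzrow H i -> nzsum_cls i ->
  exists2 r, r \in cls_reps & cls H r = cls H i.
Proof.
move=> nzi hs.
have [r hr pick_r] : exists2 r, r \in cls H i & [pick x in cls H i] = Some r.
  by case: pickP => [r hr | /(_ i) /=]; [exists r | rewrite cls_self].
have er := cls_eq nzi hr; exists r => //.
rewrite inE /nzsum_cls er -/(nzsum_cls i) hs pick_r eqxx !andbT.
by apply/asboolP; apply: cls_nzrow hr.
Qed.

Lemma exists_reduction (R : realType) (lam u0 : 'I_N -> R) : generic H u0 ->
  exists k' (H' : 'M[int]_(k', N)) (lam' : 'I_N -> R), is_reduction H lam H' lam'.
Proof.
move=> gu0; pose g (a : 'I_#|cls_reps|) : 'I_k := enum_val a.
pose H' := \matrix_(a, l) \sum_(i' in cls H (g a)) H i' l.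
have g_reps a : g a \in cls_reps by apply: enum_valP.
have H'E a l : H' a l = \sum_(i' in cls H (g a)) H i' l by rewrite mxE.
have g_nzrow a : nzrow H (g a) by apply/cls_reps_nzrow.
have g_inj a b : cls H (g a) = cls H (g b) -> a = b.
  by move=> /(cls_reps_inj (g_reps a) (g_reps b)) /enum_val_inj.
have g_surj i : nzrow H i -> (exists l, \sum_(i' in cls H i) H i' l != 0) ->
    exists a, cls H (g a) = cls H i.
  move=> nzi /asboolP /(cls_reps_cover nzi) [r hr <-].
  by exists (enum_rank_in hr r); rewrite /g enum_rankK_in.
have H'_nzrow a : nzrow H' a.
  have := g_reps a; rewrite inE => /and3P [_ /asboolP [l hl] _].
  by exists l; rewrite H'E.
exists #|cls_reps|, H', (reduced_coef H H' lam u0), g; split=> //; split=> //.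
by move=> u gu _ j; apply: (horn_reduction g_nzrow g_inj g_surj H'E H'_nzrow).
Qed.

End ReductionExists.

Lemma mapP_In (A : Type) (B : eqType) (f : A -> B) (l : seq A) y :
  y \in map f l -> exists2 x, List.In x l & y = f x.
Proof.
elim: l => [|a l IH] //=; rewrite in_cons => /orP [/eqP -> | /IH [x hx ->]].
  by exists a; [left|].
by exists x; [right|].
Qed.

Lemma map_f_In (A : Type) (B : eqType) (f : A -> B) (l : seq A) x :
  List.In x l -> f x \in map f l.
Proof.
elim: l => [|a l IH] //= [-> | h]; rewrite in_cons; first by rewrite eqxx.
by rewrite IH // orbT.
Qed.

Lemma eq_big_In (V : Type) (idx : V) (op : V -> V -> V) (A : Type) (l : seq A)
    (F G : A -> V) :
  (forall x, List.In x l -> F x = G x) ->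
  \big[op/idx]_(x <- l) F x = \big[op/idx]_(x <- l) G x.
Proof.
elim: l => [|a l IH] h; first by rewrite !big_nil.
by rewrite !big_cons h ?IH //; [move=> x hx; apply: h; right | left].
Qed.

Lemma sum_mul_indicator (R : nzRingType) (I : eqType) (r : seq I) (F : I -> R) i :
  \sum_(x <- r) F x * (x == i)%:R = (count_mem i r)%:R * F i.
Proof.
elim: r => [|x r IH]; first by rewrite big_nil mul0r.
rewrite big_cons IH /= natrD mulrDl eq_sym.
by case: eqP => [->|_]; rewrite ?mulr1 ?mulr0 ?mul1r ?mul0r.
Qed.

Lemma sum_indicator (R : nzRingType) (I : eqType) (r : seq I) i :
  \sum_(x <- r) (i == x)%:R = (count_mem i r)%:R :> R.
Proof.
rewrite -[RHS]mulr1 -(sum_mul_indicator _ (fun=> 1)).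
by apply: eq_bigr => x _; rewrite mul1r eq_sym.
Qed.

Section Tree.
Variable m : nat.
Implicit Types (t : ltree m) (cs : seq ('I_m * ltree m)).

Definition ltree_ind_In (P : ltree m -> Prop)
  (IH : forall cs, (forall c, List.In c cs -> P c.2) -> P (Node cs)) :
  forall t, P t :=
  fix F t := match t with
  | Node cs => IH cs ((fix G (l : seq ('I_m * ltree m)) :
        forall c, List.In c l -> P c.2 :=
      match l return forall c, List.In c l -> P c.2 with
      | [::] => fun c (h : List.In c [::]) => False_ind _ h
      | c0 :: l' => fun c h =>
          match h with
          | or_introl e =>
              match c0 as c1 return c1 = c -> P c.2 with
              | (a, t') => fun e' => eq_ind (a, t') (fun c => P c.2) (F t') c e'
              end e
          | or_intror h' => G l' c h'
          end
      end) cs)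
  end.

Lemma paths_cons c cs : paths (Node (c :: cs)) =
   flatten [seq map (cons c.1) (paths c.2) | c <- c :: cs].
Proof. by []. Qed.

Lemma florets_seq_node cs : florets_seq (Node cs) =
  (if cs is [::] then [::] else [:: map fst cs]) ++
  flatten [seq florets_seq c.2 | c <- cs].
Proof. by []. Qed.

Lemma big_paths_node (V : Type) (idx : V) (op : Monoid.law idx) cs
    (F : seq 'I_m -> V) : ~~ nilp cs ->
  \big[op/idx]_(p <- paths (Node cs)) F p =
  \big[op/idx]_(c <- cs) \big[op/idx]_(p <- paths c.2) F (c.1 :: p).
Proof.
case: cs => [|c cs] // _; rewrite paths_cons big_flatten big_map.
by apply: eq_bigr => x _; rewrite big_map.
Qed.

Lemma mem_florets_child cs c f : List.In c cs -> f \in florets_seq c.2 ->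
  f \in florets_seq (Node cs).
Proof.
move=> hc hf; rewrite florets_seq_node mem_cat; apply/orP; right.
apply/flattenP; exists (florets_seq c.2) => //.
exact: (map_f_In (fun c : 'I_m * ltree m => florets_seq c.2)).
Qed.

Lemma mem_florets_root cs : ~~ nilp cs -> map fst cs \in florets_seq (Node cs).
Proof. by case: cs => // c cs _; rewrite florets_seq_node mem_cat mem_head. Qed.

Lemma local_okP cs : local_ok (Node cs) ->
  [/\ nilp cs || (1 < size cs)%N, uniq (map fst cs) &
      forall c, List.In c cs -> local_ok c.2].
Proof.
rewrite /= => /and3P [h1 h2 h3]; split => // c hc.
by move/allP: h3; apply; apply: (map_f_In (fun c : 'I_m * ltree m => local_ok c.2)).
Qed.

Lemma mem_paths_nodeP cs p : ~~ nilp cs -> p \in paths (Node cs) ->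
  exists2 c, List.In c cs & exists2 p', p' \in paths c.2 & p = c.1 :: p'.
Proof.
case: cs => [|c0 cs] // _; rewrite paths_cons => /flattenP [s hs hp].
have [c hc e] := mapP_In hs; subst s.
by move/mapP: hp => [p' hp' ->]; exists c => //; exists p'.
Qed.

Lemma mem_paths_node cs c p' : List.In c cs -> p' \in paths c.2 ->
  c.1 :: p' \in paths (Node cs).
Proof.
case: cs => [|c0 cs] // hc hp; rewrite paths_cons; apply/flattenP.
exists (map (cons c.1) (paths c.2)); last exact: map_f.
exact: (map_f_In (fun c : 'I_m * ltree m => map (cons c.1) (paths c.2)) hc).
Qed.

Lemma size_paths_gt0 t : (0 < size (paths t))%N.
Proof.
elim/ltree_ind_In: t => -[|[a t] cs] IH //.
have := IH (a, t) (or_introl erefl); rewrite paths_cons /= size_cat size_map /=.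
by move=> h; rewrite addn_gt0 h.
Qed.

Lemma path_label_floret t p x : p \in paths t -> x \in p ->
  exists2 f, f \in florets_seq t & x \in f.
Proof.
elim/ltree_ind_In: t p => cs IH p; case: (boolP (nilp cs)) => [/nilP -> | ncs].
  by rewrite inE => /eqP ->.
move=> /(mem_paths_nodeP ncs) [c hc [p' hp' ->]].
rewrite in_cons => /orP [/eqP -> | hx].
  by exists (map fst cs); [apply: mem_florets_root | apply: (map_f_In fst hc)].
have [f hf hxf] := IH c hc p' hp' hx.
by exists f => //; apply: mem_florets_child hc hf.
Qed.

Lemma floret_label_path t f x : f \in florets_seq t -> x \in f ->
  exists2 p, p \in paths t & x \in p.
Proof.
elim/ltree_ind_In: t f => cs IH f; rewrite florets_seq_node mem_cat => /orP [hr | hf].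
  case: cs IH hr => [|c0 cs] // IH; rewrite inE => /eqP -> /mapP_In [c hc ->].
  have := size_paths_gt0 c.2; case e: (paths c.2) => [|p' ps] // _.
  exists (c.1 :: p'); last exact: mem_head.
  by apply: mem_paths_node => //; rewrite e mem_head.
move: hf => /flattenP [s /mapP_In [c hc ->] hfs] hx.
have [p' hp' hxp] := IH c hc f hfs hx.
by exists (c.1 :: p'); [apply: mem_paths_node | rewrite in_cons hxp orbT].
Qed.

Lemma floret_uniq_size t f : local_ok t -> f \in florets_seq t ->
  uniq f /\ (1 < size f)%N.
Proof.
elim/ltree_ind_In: t f => cs IH f /local_okP [h1 h2 h3].
rewrite florets_seq_node mem_cat => /orP [hr | /flattenP [s /mapP_In [c hc ->] hfs]].
  case: cs IH h1 h2 h3 hr => [|c0 cs] // IH h1 h2 h3; rewrite inE => /eqP ->.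
  by rewrite size_map.
exact: (IH c hc f (h3 c hc) hfs).
Qed.

Variable R : realType.
Implicit Type s : 'I_m -> R.

Definition path_weight s (p : seq 'I_m) := \prod_(x <- p) s x.

Lemma prod_count_mem s p : \prod_i s i ^+ count_mem i p = path_weight s p.
Proof.
elim: p => [|x p IH]; first by rewrite /path_weight big_nil big1.
rewrite /path_weight in IH *; rewrite big_cons -IH /=.
under eq_bigr do rewrite exprD.
rewrite big_split /= (bigD1 x) //= eqxx expr1 big1 ?mulr1 // => i /negPf.
by rewrite eq_sym => ->.
Qed.

Lemma sum_path_weight t s :
  (forall f, f \in florets_seq t -> \sum_(x <- f) s x = 1) ->
  \sum_(p <- paths t) path_weight s p = 1.
Proof.
elim/ltree_ind_In: t => cs IH hf; case: (boolP (nilp cs)) => [/nilP -> | ncs].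
  by rewrite /= big_seq1 /path_weight big_nil.
rewrite big_paths_node // (@eq_big_In _ _ _ _ _ _ (fun c : 'I_m * ltree m => s c.1)).
  by rewrite -(big_map fst xpredT s); apply/hf/mem_florets_root.
move=> c hc; under eq_bigr do rewrite /path_weight big_cons.
rewrite -mulr_sumr IH ?mulr1 // => f hf'; apply/hf/(mem_florets_child hc hf').
Qed.

Definition exp_count s t l :=
  \sum_(p <- paths t) (count_mem l p)%:R * path_weight s p.

Lemma exp_count_node s cs l : ~~ nilp cs ->
  (forall c, List.In c cs -> \sum_(p <- paths c.2) path_weight s p = 1) ->
  exp_count s (Node cs) l =
  \sum_(c <- cs) s c.1 * ((c.1 == l)%:R + exp_count s c.2 l).
Proof.
move=> ncs sum1; rewrite /exp_count big_paths_node //; apply: eq_big_In => c hc.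
rewrite (eq_bigr (fun p => s c.1 * ((c.1 == l)%:R * path_weight s p +
                                    (count_mem l p)%:R * path_weight s p))).
  by rewrite -mulr_sumr big_split /= -mulr_sumr sum1 ?mulr1.
by move=> p _; rewrite /path_weight big_cons /= natrD; ring.
Qed.

Lemma root_weight_floret (r f : seq 'I_m) s i : uniq r -> i \in f ->
  \sum_(x <- r) s x = 1 -> perm_eq f r \/ ~~ has (fun x => x \in r) f ->
  \sum_(x <- r) s x * (x == i)%:R = s i * \sum_(x <- r) s x * (x \in f)%:R.
Proof.
move=> ur hi sum1 [fr | /hasPn fr]; rewrite sum_mul_indicator count_uniq_mem //.
  rewrite -(perm_mem fr) hi mul1r.
  under eq_big_seq => x hx do rewrite (perm_mem fr) hx mulr1.
  by rewrite sum1 mulr1.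
rewrite (negPf (fr i hi)) mul0r big_seq big1 ?mulr0 // => x hx.
by case: (boolP (x \in f)) => [/fr /negP|]; rewrite ?mulr0.
Qed.

Lemma exp_count_floret t s f i : local_ok t -> uniq f -> i \in f ->
  (forall g, g \in florets_seq t -> \sum_(x <- g) s x = 1) ->
  (forall g, g \in florets_seq t -> perm_eq f g \/ ~~ has (fun x => x \in g) f) ->
  exp_count s t i = s i * \sum_(l <- f) exp_count s t l.
Proof.
move=> + uf hi; elim/ltree_ind_In: t => cs IH /local_okP [_ ur ok] sum1 staged.
case: (boolP (nilp cs)) => [/nilP -> | ncs].
  rewrite /exp_count /= big_seq1 mul0r big1 ?mulr0 // => l _.
  by rewrite big_seq1 mul0r.
have child c : List.In c cs -> {subset florets_seq c.2 <= florets_seq (Node cs)}.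
  by move=> hc g; apply: mem_florets_child.
have child_sum1 c : List.In c cs -> \sum_(p <- paths c.2) path_weight s p = 1.
  by move=> hc; apply: sum_path_weight => g /(child _ hc); apply: sum1.
have IHc c : List.In c cs ->
    exp_count s c.2 i = s i * \sum_(l <- f) exp_count s c.2 l.
  move=> hc; apply: IH (ok _ hc) _ _ => // g /(child _ hc) hg.
    exact: sum1.
  exact: staged.
pose E (c : 'I_m * ltree m) := \sum_(l <- f) exp_count s c.2 l.
rewrite exp_count_node // (@eq_big_In _ _ _ _ _ _ (fun c : 'I_m * ltree m =>
    s c.1 * (c.1 == i)%:R + s i * (s c.1 * E c))); last first.
  by move=> c hc; rewrite IHc // mulrDr mulrCA.
have -> : \sum_(l <- f) exp_count s (Node cs) l =
          \sum_(c <- cs) (s c.1 * (c.1 \in f)%:R + s c.1 * E c).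
  rewrite (eq_bigr _ (fun l _ => exp_count_node l ncs child_sum1)) exchange_big /=.
  apply: eq_bigr => c _; rewrite -mulr_sumr big_split /= sum_indicator.
  by rewrite count_uniq_mem // mulrDr.
rewrite !big_split /= -!mulr_sumr mulrDr; congr (_ + _).
rewrite -(big_map fst xpredT (fun x => s x * (x == i)%:R)).
rewrite -(big_map fst xpredT (fun x => s x * (x \in f)%:R)).
have hroot := mem_florets_root ncs.
by apply: root_weight_floret => //; [apply: sum1 | apply: staged].
Qed.

End Tree.

Lemma sumr_gt0_term (R : numDomainType) (I : finType) (P : pred I) (F : I -> R) i :
  P i -> 0 < F i -> (forall j, P j -> 0 <= F j) -> 0 < \sum_(j | P j) F j.
Proof.
move=> Pi Fi F0; rewrite (bigD1 i) //= ltr_pwDl // sumr_ge0 // => j /andP [Pj _].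
exact: F0.
Qed.

Lemma sum_set_seq (V : nmodType) (I : finType) (G : I -> V) (g : seq I) :
  uniq g -> \sum_(i in [set x in g]) G i = \sum_(x <- g) G x.
Proof. by move=> ug; rewrite big_uniq //; apply: eq_bigl => x; rewrite inE. Qed.

Lemma ln_le_subr1 (R : realType) (y : R) : 0 < y -> ln y <= y - 1.
Proof. by move=> y0; have := expR_ge1Dx (ln y); rewrite lnK ?posrE // => h; lra. Qed.

Lemma ln_eq_subr1 (R : realType) (y : R) : 0 < y -> ln y = y - 1 -> y = 1.
Proof.
move=> y0 e; apply/eqP/negPn/negP => ny.
have := @expR_gt1Dx _ (ln y); rewrite ln_eq0 // => /(_ ny).
by rewrite lnK ?posrE // e; lra.
Qed.

Lemma ln_prod (R : realType) (I : finType) (f : I -> R) :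
  (forall i, 0 < f i) -> ln (\prod_i f i) = \sum_i ln (f i).
Proof.
move=> f0; suff [] : 0 < \prod_i f i /\ ln (\prod_i f i) = \sum_i ln (f i) by [].
apply: (big_rec2 (fun y1 y2 => 0 < y2 /\ ln y2 = y1)); first by rewrite ln1.
by move=> i y1 y2 _ [y2_gt0 <-]; rewrite mulr_gt0 // lnM ?posrE.
Qed.

(* Gibbs' inequality, via ln y <= y - 1 applied to y = s / t. *)
Lemma sum_mul_ln_le (R : realType) (I : finType) (x s t : I -> R) :
  (forall i, 0 <= x i) -> (forall i, 0 < s i) -> (forall i, 0 < t i) ->
  \sum_i x i * (s i / t i) = \sum_i x i ->
  \sum_i x i * ln (s i) <= \sum_i x i * ln (t i) /\
  (\sum_i x i * ln (s i) = \sum_i x i * ln (t i) -> forall i, 0 < x i -> s i = t i).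
Proof.
move=> x0 s0 t0 hsum; pose y i := s i / t i.
have y0 i : 0 < y i by rewrite divr_gt0.
pose d i := x i * ((y i - 1) - ln (y i)).
have d0 i : 0 <= d i by rewrite mulr_ge0 // subr_ge0 ln_le_subr1.
have gap : \sum_i x i * ln (t i) - \sum_i x i * ln (s i) = \sum_i d i.
  have hx1 : \sum_i x i * (y i - 1) = 0.
    by under eq_bigr do rewrite mulrBr mulr1; rewrite sumrB hsum subrr.
  under [RHS]eq_bigr do rewrite /d mulrBr; rewrite sumrB hx1 sub0r -sumrB -sumrN.
  by apply: eq_bigr => i _; rewrite /y ln_div ?posrE //; ring.
split=> [|heq i xi]; first by rewrite -subr_ge0 gap sumr_ge0.
have sum_d0 : \sum_i d i = 0 by rewrite -gap heq subrr.
have /eqP : d i = 0 by apply: (psumr_eq0P _ sum_d0) => // k _; apply: d0.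
rewrite mulf_eq0 (negPf (lt0r_neq0 xi)) /= subr_eq0 => /eqP /esym /(ln_eq_subr1 (y0 i)).
by move/(congr1 ( *%R^~ (t i))); rewrite divfK ?mul1r ?lt0r_neq0.
Qed.

Section StagedTree.
Variables (R : realType) (m : nat) (T : ltree m).
Hypothesis hT : staged_tree T.

Local Notation N := (size (paths T)).
Local Notation nF := (size (florets T)).
Local Notation floret a := (nth set0 (florets T) a).
Local Notation H := (Hst T).

Lemma floret_mem (a : 'I_nF) : floret a \in florets T.
Proof. exact: mem_nth. Qed.

Lemma floret_seqP (a : 'I_nF) :
  exists2 f, f \in florets_seq T & floret a = [set x in f].
Proof. by have := floret_mem a; rewrite mem_undup => /mapP [f hf ->]; exists f. Qed.

Lemma mem_florets_floret A : A \in florets T -> exists a : 'I_nF, floret a = A.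
Proof.
move=> hA; rewrite -index_mem in hA; exists (Ordinal hA).
by rewrite /= nth_index // -index_mem.
Qed.

Lemma floret_of_seq f :
  f \in florets_seq T -> exists a : 'I_nF, floret a = [set x in f].
Proof. by move=> hf; apply: mem_florets_floret; rewrite mem_undup map_f. Qed.

Lemma sum_floret_seq f : f \in florets_seq T ->
  exists a : 'I_nF, forall (V : nmodType) (G : 'I_m -> V),
    \sum_(x <- f) G x = \sum_(i in floret a) G i.
Proof.
move=> hf; have [a ea] := floret_of_seq hf; have [uf _] := floret_uniq_size hT.1 hf.
by exists a => V G; rewrite ea sum_set_seq.
Qed.

Lemma mem_floret_inj (a b : 'I_nF) l : l \in floret a -> l \in floret b -> a = b.
Proof.
have [f hf ef] := floret_seqP a; have [g hg eg] := floret_seqP b.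
rewrite ef eg !inE => la lb.
case: (hT.2 f g hf hg) => [fg | /hasPn /(_ l la)]; last by rewrite lb.
apply/val_inj/eqP; rewrite -(nth_uniq set0 (ltn_ord a) (ltn_ord b)) ?undup_uniq //.
by rewrite ef eg; apply/eqP/setP => x; rewrite !inE (perm_mem fg).
Qed.

Lemma floret_pred1 (a : 'I_nF) l :
  l \in floret a -> [pred b : 'I_nF | l \in floret b] =1 pred1 a.
Proof. by move=> la b /=; apply/idP/eqP => [lb|->] //; apply: mem_floret_inj lb la. Qed.

Lemma Hst_label i j : H (lshift nF i) j = (mu T i j)%:Z.
Proof. by rewrite mxE (unsplitK (inl i)). Qed.

Lemma Hst_floret a j : H (rshift m a) j = - \sum_(l in floret a) (mu T l j)%:Z.
Proof. by rewrite mxE (unsplitK (inr a)). Qed.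

Lemma mem_path_mu_gt0 p l :
  p \in paths T -> l \in p -> exists j : 'I_N, (0 < mu T l j)%N.
Proof.
move=> hp hl; rewrite -index_mem in hp; exists (Ordinal hp).
by rewrite /mu /= nth_index -?index_mem // -has_count has_pred1.
Qed.

Lemma mu_gt0_floret i j : (0 < mu T i j)%N -> exists a : 'I_nF, i \in floret a.
Proof.
rewrite /mu -has_count has_pred1 => hi.
have [f hf hif] := path_label_floret (mem_nth [::] (ltn_ord j)) hi.
by have [a ea] := floret_of_seq hf; exists a; rewrite ea inE.
Qed.

Lemma floret_mu_gt0 (a : 'I_nF) l : l \in floret a -> exists j : 'I_N, (0 < mu T l j)%N.
Proof.
have [f hf ->] := floret_seqP a; rewrite inE => hl.
by have [p hp hlp] := floret_label_path hf hl; apply: mem_path_mu_gt0 hp hlp.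
Qed.

Lemma floret_nonempty (a : 'I_nF) : exists l, l \in floret a.
Proof.
have [f hf ->] := floret_seqP a; have [_] := floret_uniq_size hT.1 hf.
by case: f hf => // x f _ _; exists x; rewrite inE mem_head.
Qed.

Lemma floret_other_label (a : 'I_nF) l : exists2 l', l' \in floret a & l' != l.
Proof.
have [f hf ->] := floret_seqP a; have [uf] := floret_uniq_size hT.1 hf.
case: f uf hf => [|x [|y f]] //= /andP [xyf _] _ _.
case: (eqVneq x l) => [exl | nxl]; last by exists x; rewrite ?inE ?eqxx.
exists y; first by rewrite !inE eqxx orbT.
by rewrite -exl; apply: contraNneq xyf => ->; rewrite mem_head.
Qed.

Definition label_count (u : 'I_N -> R) i := \sum_j (mu T i j)%:R * u j.

Definition floret_count (u : 'I_N -> R) (a : 'I_nF) :=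
  \sum_(l in floret a) label_count u l.

Lemma Hu_label u i : Hu H u (lshift nF i) = label_count u i.
Proof. by apply: eq_bigr => j _; rewrite Hst_label. Qed.

Lemma Hu_floret u a : Hu H u (rshift m a) = - floret_count u a.
Proof.
rewrite /Hu /floret_count /label_count exchange_big -sumrN /=; apply: eq_bigr => j _.
by rewrite Hst_floret rmorphN rmorph_sum mulNr mulr_suml.
Qed.

(* Labels lying in no floret occur on no path; the value 1/2 only serves to
   keep every parameter in (0, 1). *)
Definition mle_param (u : 'I_N -> R) i :=
  if [pick a : 'I_nF | i \in floret a] is Some a then label_count u i / floret_count u a
  else 2^-1.

Lemma mle_param_floret u (a : 'I_nF) i : i \in floret a ->
  mle_param u i = label_count u i / floret_count u a.
Proof.
move=> ia; rewrite /mle_param; case: pickP => [b ib | /(_ a)]; last by rewrite ia.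
by rewrite (mem_floret_inj ib ia).
Qed.

Lemma lamstE j : lamst R T j = \prod_a (-1) ^ H (rshift m a) j.
Proof. by rewrite /lamst exprz_sum // oppr_eq0 oner_eq0. Qed.

Lemma horn_Hst_counts u j :
  horn H (lamst R T) u j =
  \prod_i label_count u i ^+ mu T i j * \prod_a floret_count u a ^ H (rshift m a) j.
Proof.
rewrite /horn big_split_ord /= lamstE.
under [X in _ * (X * _)]eq_bigr do rewrite Hu_label Hst_label -exprnP.
under [X in _ * (_ * X)]eq_bigr do rewrite Hu_floret expNrz.
rewrite big_split /=.
have SS : \prod_a (-1) ^ H (rshift m a) j * \prod_a (-1) ^ H (rshift m a) j = 1 :> R.
  by rewrite -big_split big1 // => a _ /=; rewrite -expfzMl mulrNN mulr1 exp1rz.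
by rewrite mulrCA [X in _ * X]mulrA SS mul1r.
Qed.

Lemma prod_floret_count u j : (forall a, floret_count u a != 0) ->
  \prod_a floret_count u a ^ H (rshift m a) j =
  \prod_l \prod_(a : 'I_nF | l \in floret a) (floret_count u a)^-1 ^+ mu T l j.
Proof.
move=> nY; rewrite (exchange_big_dep xpredT) //=; apply: eq_bigr => a _.
rewrite Hst_floret -sumrN exprz_sum //.
by apply: eq_bigr => l _; rewrite -exprz_inv -exprnP.
Qed.

Lemma horn_Hst u j : (forall a, floret_count u a != 0) ->
  horn H (lamst R T) u j = \prod_i mle_param u i ^+ mu T i j.
Proof.
move=> nY; rewrite horn_Hst_counts prod_floret_count // -big_split.
apply: eq_bigr => l _ /=; case e: (mu T l j) => [|n].
  by rewrite big1 ?expr0 ?mulr1 // => a _; rewrite expr0.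
have [a la] : exists a : 'I_nF, l \in floret a.
  by apply: (@mu_gt0_floret _ j); rewrite e.
rewrite (big_pred1 a (floret_pred1 la)).
by rewrite (mle_param_floret _ la) exprMn.
Qed.

Lemma mu_no_floret l j : (forall a : 'I_nF, l \notin floret a) -> mu T l j = 0%N.
Proof.
move=> nl; apply/eqP; rewrite -leqn0 leqNgt; apply/negP => /mu_gt0_floret [a].
by rewrite (negPf (nl a)).
Qed.

Lemma sum_florets (V : nmodType) (G : 'I_m -> V) :
  (forall l, (forall a : 'I_nF, l \notin floret a) -> G l = 0) ->
  \sum_(a : 'I_nF) \sum_(l in floret a) G l = \sum_l G l.
Proof.
move=> G0; rewrite (exchange_big_dep xpredT) //=; apply: eq_bigr => l _.
case: (pickP (fun a : 'I_nF => l \in floret a)) => [a la | nl].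
  by rewrite (big_pred1 a (floret_pred1 la)).
by rewrite big_pred0 // G0 // => a; rewrite nl.
Qed.

Lemma colsum_Hst j : \sum_r H r j = 0.
Proof.
rewrite big_split_ord /=.
under eq_bigr do rewrite Hst_label.
under [X in _ + X]eq_bigr do rewrite Hst_floret.
by rewrite sumrN sum_florets ?subrr // => l nl; rewrite mu_no_floret.
Qed.

Lemma sum_mle_param u (a : 'I_nF) : floret_count u a != 0 ->
  \sum_(i in floret a) mle_param u i = 1.
Proof.
move=> nY; under eq_bigr => i ia do rewrite (mle_param_floret _ ia).
by rewrite -mulr_suml mulfV.
Qed.

Lemma sum_horn_Hst u : (forall a, floret_count u a != 0) ->
  \sum_j horn H (lamst R T) u j = 1.
Proof.
move=> nY; under eq_bigr do rewrite horn_Hst //.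
rewrite -[RHS](@sum_path_weight _ _ T (mle_param u)).
  rewrite [RHS](big_nth [::]) big_mkord.
  by apply: eq_bigr => j _; exact: prod_count_mem.
by move=> f /sum_floret_seq [a ->]; apply: sum_mle_param.
Qed.

Definition positive (u : 'I_N -> R) := forall j, 0 < u j.

Section Positive.
Variable u : 'I_N -> R.
Hypothesis u_gt0 : positive u.

Lemma label_count_ge0 i : 0 <= label_count u i.
Proof. by apply: sumr_ge0 => j _; rewrite mulr_ge0 ?ler0n ?ltW. Qed.

Lemma label_count_gt0 i j : (0 < mu T i j)%N -> 0 < label_count u i.
Proof.
move=> hj; apply: (sumr_gt0_term (i := j)) => // [|k _].
  by rewrite mulr_gt0 ?ltr0n.
by rewrite mulr_ge0 ?ler0n ?ltW.
Qed.

Lemma label_count_floret_gt0 (a : 'I_nF) l : l \in floret a -> 0 < label_count u l.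
Proof. by move=> /floret_mu_gt0 [j]; apply: label_count_gt0. Qed.

Lemma floret_count_gt0 a : 0 < floret_count u a.
Proof.
have [l la] := floret_nonempty a.
apply: (sumr_gt0_term (i := l)) => //; first exact: label_count_floret_gt0 la.
by move=> i _; apply: label_count_ge0.
Qed.

Lemma label_count_lt_floret_count (a : 'I_nF) l : l \in floret a ->
  label_count u l < floret_count u a.
Proof.
move=> la; have [l' la' nl'] := floret_other_label a l.
rewrite /floret_count (bigD1 l) //= ltrDl.
apply: (sumr_gt0_term (i := l')) => [||i _]; first by rewrite la'.
  exact: label_count_floret_gt0 la'.
exact: label_count_ge0.
Qed.

Lemma mle_param_bounds i : 0 < mle_param u i < 1.
Proof.
case: (pickP (fun a : 'I_nF => i \in floret a)) => [a ia | ni].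
  rewrite (mle_param_floret _ ia) divr_gt0 ?ltr_pdivrMr ?mul1r ?floret_count_gt0 //=.
    exact: label_count_lt_floret_count.
  exact: label_count_floret_gt0 ia.
rewrite /mle_param; case: pickP => [a /[!ni] //|_].
by rewrite invr_gt0 ltr0n invf_lt1 ?ltr0n ?ltr1n.
Qed.

Lemma generic_positive : generic H u.
Proof.
move=> r; rewrite -[r]splitK; case: (split r) => [i [j]|a _] /=.
  by rewrite Hst_label Hu_label eqz_nat -lt0n => /label_count_gt0 /lt0r_neq0.
by rewrite Hu_floret oppr_eq0 lt0r_neq0 ?floret_count_gt0.
Qed.

Lemma horn_Hst_positive j : horn H (lamst R T) u j = \prod_i mle_param u i ^+ mu T i j.
Proof. by rewrite horn_Hst // => a; rewrite lt0r_neq0 ?floret_count_gt0. Qed.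

Lemma horn_Hst_gt0 j : 0 < horn H (lamst R T) u j.
Proof.
rewrite horn_Hst_positive; apply: prodr_gt0 => i _.
by rewrite exprn_gt0 //; case/andP: (mle_param_bounds i).
Qed.

Lemma model_horn_Hst : model R T (horn H (lamst R T) u).
Proof.
exists (mle_param u); split => [i|A /mem_florets_floret [a <-]|j].
- exact: mle_param_bounds.
- by rewrite sum_mle_param // lt0r_neq0 ?floret_count_gt0.
- exact: horn_Hst_positive.
Qed.

End Positive.

Lemma nzrow_floret (a : 'I_nF) : nzrow H (rshift m a).
Proof.
have [l la] := floret_nonempty a; have [j hj] := floret_mu_gt0 la.
exists j; rewrite Hst_floret oppr_eq0 lt0r_neq0 //.
by apply: (sumr_gt0_term (i := l)) => //; rewrite ltz_nat.
Qed.

Lemma floret_count_generic u : generic H u -> forall a, floret_count u a != 0.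
Proof. by move=> gu a; have := gu _ (nzrow_floret a); rewrite Hu_floret oppr_eq0. Qed.

Lemma label_count_no_floret u l :
  (forall a : 'I_nF, l \notin floret a) -> label_count u l = 0.
Proof.
by move=> nl; rewrite /label_count big1 // => j _; rewrite mu_no_floret ?mul0r.
Qed.

Lemma loglik_model (u p : 'I_N -> R) (s : 'I_m -> R) : (forall i, 0 < s i) ->
  (forall j, p j = \prod_i s i ^+ mu T i j) ->
  loglik u p = \sum_i label_count u i * ln (s i).
Proof.
move=> s0 ps; have lnp j : ln (p j) = \sum_i (mu T i j)%:R * ln (s i).
  rewrite ps ln_prod => [|i]; last by rewrite exprn_gt0.
  by apply: eq_bigr => i _; rewrite lnXn // mulr_natl.
rewrite /loglik; under eq_bigr do rewrite lnp mulr_sumr.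
rewrite exchange_big; apply: eq_bigr => i _; rewrite /label_count mulr_suml.
by apply: eq_bigr => j _; ring.
Qed.

Lemma sum_label_count_ratio u (s : 'I_m -> R) : positive u ->
  (forall a : 'I_nF, \sum_(i in floret a) s i = 1) ->
  \sum_i label_count u i * (s i / mle_param u i) = \sum_i label_count u i.
Proof.
move=> pu sum1.
rewrite -!sum_florets => [|l nl|l nl]; rewrite ?label_count_no_floret ?mul0r //.
apply: eq_bigr => a _; transitivity (\sum_(i in floret a) floret_count u a * s i).
  apply: eq_bigr => i ia; rewrite (mle_param_floret _ ia).
  have := label_count_floret_gt0 pu ia; have := floret_count_gt0 pu a.
  by move=> /lt0r_neq0 nY /lt0r_neq0 nx; field; rewrite nx nY.
by rewrite -mulr_sumr sum1 mulr1.
Qed.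

Lemma is_MLE_horn_Hst u : positive u ->
  is_MLE (model R T) u (horn H (lamst R T) u).
Proof.
move=> pu; split=> [|p [s [s01 sum1 ps]]]; first exact: model_horn_Hst.
have s0 i : 0 < s i by case/andP: (s01 i).
have t0 i : 0 < mle_param u i by case/andP: (mle_param_bounds pu i).
rewrite (loglik_model u s0 ps) (loglik_model u t0 (horn_Hst_positive pu)).
have [le_ll eq_ll] := sum_mul_ln_le (label_count_ge0 pu) s0 t0
  (sum_label_count_ratio pu (fun a => sum1 _ (floret_mem a))).
split=> // /eq_ll e j; rewrite ps horn_Hst_positive //; apply: eq_bigr => i _.
case h: (mu T i j) => [|n]; first by rewrite !expr0.
by rewrite e // (@label_count_gt0 _ pu _ j) ?h.
Qed.

Lemma label_count_model p (s : 'I_m -> R) (a : 'I_nF) i :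
  (forall A, A \in florets T -> \sum_(i in A) s i = 1) ->
  (forall j, p j = \prod_i s i ^+ mu T i j) ->
  i \in floret a -> label_count p i = s i * floret_count p a.
Proof.
move=> sum1 ps ia.
have exp_countE l : label_count p l = exp_count s T l.
  rewrite /label_count /exp_count [RHS](big_nth [::]) big_mkord.
  by apply: eq_bigr => j _; rewrite ps prod_count_mem.
have [f hf ef] := floret_seqP a; have [uf _] := floret_uniq_size hT.1 hf.
have sum1_seq g : g \in florets_seq T -> \sum_(x <- g) s x = 1.
  by move=> /sum_floret_seq [b ->]; apply/sum1/floret_mem.
rewrite exp_countE (exp_count_floret hT.1 uf _ sum1_seq (hT.2 f ^~ hf)); last first.
  by move: ia; rewrite ef inE.
rewrite /floret_count ef sum_set_seq //; congr (_ * _).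
by apply: eq_bigr => l _; rewrite exp_countE.
Qed.

Lemma model_horn_HstP p : model R T p <->
  exists u, positive u /\ forall j, p j = horn H (lamst R T) u j.
Proof.
split=> [[s [s01 sum1 ps]] | [u [pu hp]]]; last first.
  have -> : p = horn H (lamst R T) u by apply: funext.
  exact: model_horn_Hst.
have pp : positive p.
  by move=> j; rewrite ps; apply: prodr_gt0 => i _; case/andP: (s01 i) => /exprn_gt0.
exists p; split=> // j; rewrite horn_Hst_positive // {1}ps; apply: eq_bigr => i _.
case h: (mu T i j) => [|n]; first by rewrite !expr0.
have [a ia] : exists a : 'I_nF, i \in floret a.
  by apply: (@mu_gt0_floret _ j); rewrite h.
rewrite (mle_param_floret _ ia) (label_count_model sum1 ps ia) mulfK //.
exact/lt0r_neq0/floret_count_gt0.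
Qed.

Section ReducedPair.
Variables (k' : nat) (H' : 'M[int]_(k', N)) (lam' : 'I_N -> R).
Hypothesis red : is_reduction H (lamst R T) H' lam'.

Lemma horn_reduction_positive u : positive u ->
  forall j, horn H' lam' u j = horn H (lamst R T) u j.
Proof.
have [g [g_nz [_ _ H'E H'_nz same]]] := red.
move=> pu j; have gu := generic_positive pu.
by rewrite same //; exact: (generic_reduction g_nz H'E H'_nz gu).
Qed.

Lemma horn_pair_reduction : horn_pair H' lam'.
Proof.
have [g [g_nz [g_inj g_surj H'E H'_nz same]]] := red.
have generic' (u : 'I_N -> R) : generic H u -> generic H' u.
  by move=> gu; exact: (generic_reduction g_nz H'E H'_nz gu).
pose v : 'I_N -> R := fun=> 1; have pv : positive v by move=> j; apply: ltr01.
split=> // [|a b /(reduction_no_row_mult g_nz g_inj H'E H'_nz)//|u pu].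
  split=> [j|j|].
  - by rewrite (colsum_reduction g_nz g_inj g_surj H'E H'_nz) colsum_Hst.
  - apply/eqP => lam'0; have := horn_Hst_gt0 pv j.
    by rewrite -horn_reduction_positive // /horn lam'0 mul0r ltxx.
  apply: (reduction_sum_horn g_nz H'E H'_nz (generic_positive pv) _ same) => u gu.
  exact/sum_horn_Hst/floret_count_generic.
split=> [i _|j]; first exact/(generic' _ (generic_positive pu))/H'_nz.
by rewrite horn_reduction_positive ?horn_Hst_gt0.
Qed.

End ReducedPair.

End StagedTree.

Unset Implicit Arguments.

Theorem corollary3p6 (R : realType) (m : nat) (T : ltree m)
    (hT : staged_tree T) :
  (exists (k' : nat) (H' : 'M[int]_(k', size (paths T)))
          (lam' : 'I_(size (paths T)) -> R),
      is_reduction (Hst T) (lamst R T) H' lam') /\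
  (forall (k' : nat) (H' : 'M[int]_(k', size (paths T)))
          (lam' : 'I_(size (paths T)) -> R),
      is_reduction (Hst T) (lamst R T) H' lam' ->
      [/\ horn_pair H' lam',
          (forall u : 'I_(size (paths T)) -> R, (forall j, 0 < u j) ->
             is_MLE (model R T) u (horn H' lam' u))
        & (forall p : 'I_(size (paths T)) -> R,
             model R T p <->
             exists u : 'I_(size (paths T)) -> R,
               (forall j, 0 < u j) /\ forall j, p j = horn H' lam' u j)]).
Proof.
have ones_positive : positive (fun _ : 'I_(size (paths T)) => 1 : R).
  by move=> j; apply: ltr01.
split; first exact: (exists_reduction (lamst R T) (generic_positive hT ones_positive)).
move=> k' H' lam' red; have horn_red := horn_reduction_positive hT red.
split=> [|u pu|p]; first exact (horn_pair_reduction hT red).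
  have -> : horn H' lam' u = horn (Hst T) (lamst R T) u.
    by apply: funext; apply: horn_red.
  exact (is_MLE_horn_Hst hT pu).
rewrite model_horn_HstP //.
by split=> -[u [pu hp]]; exists u; split=> // j; rewrite hp horn_red.
Qed.
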